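(* Let $\Gamma$ be a Shilla distance-regular graph with $b(\Gamma)=b$ and eigenvalues $\theta_0>\theta_1>\theta_2>\theta_3$. Then: (i) $q^2_{11}>0$; (ii) $q^3_{11}\geq 0$ if and only if $\theta_3\geq -\frac{b(bb_2+c_2)}{b_2+c_2}$. In particular, $\theta_3\geq -\frac{b(bb_2+c_2)}{b_2+c_2}$.
   Context: A connected graph $\Gamma$ of diameter $D$ is distance-regular if there are integers $b_i,c_i$ ($0\le i\le D$) such that for any two vertices $x,y$ at distance $i$, exactly $c_i$ neighbours of $y$ are at distance $i-1$ from $x$ and exactly $b_i$ neighbours of $y$ are at distance $i+1$ from $x$. Then $\Gamma$ is regular of valency $k=b_0$, and $a_i:=k-b_i-c_i$. Its eigenvalues (of the adjacency matrix) are $k=\theta_0>\theta_1>\dots>\theta_D$. A Shilla distance-regular graph is a distance-regular graph of diameter $3$ whose second largest eigenvalue satisfies $\theta_1=a_3$; for such graphs $k=(a_3-a_1)a_3$ and $b(\Gamma):=a_3-a_1=k/a_3$. Let $n$ be the number of vertices and $E_i$ the orthogonal projection onto the eigenspace of $\theta_i$. The Krein parameters $q^h_{ij}$ are defined by $E_i\circ E_j=\frac1n\sum_{h=0}^D q^h_{ij}E_h$, where $\circ$ is the entrywise product. *)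

From HB Require Import structures.
From mathcomp Require Import all_boot all_order all_algebra.
From mathcomp Require Import reals.
Set Implicit Arguments. Unset Strict Implicit. Unset Printing Implicit Defensive.
Import Order.TTheory GRing.Theory Num.Theory.

(* A simple graph on the vertex set 'I_n is given by an adjacency relation
   e : rel 'I_n (required symmetric and irreflexive below). *)

Fixpoint within (n : nat) (e : rel 'I_n) (k : nat) (x y : 'I_n) : bool :=
  match k with
  | 0 => x == y
  | k'.+1 => within e k' x y || [exists z, within e k' x z && e z y]
  end.

(* Graph distance: least k with a walk of length <= k (valid for connected
   graphs, where it is < n). *)
Definition dist (n : nat) (e : rel 'I_n) (x y : 'I_n) : nat :=
  find (fun k => within e k x y) (iota 0 n).

Definition distance_regular (n : nat) (e : rel 'I_n) (D : nat)
    (b c : nat -> nat) : Prop :=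
  [/\ symmetric e, irreflexive e,
      (forall x y, within e D x y),
      (exists x y, ~~ within e D.-1 x y) &
      (forall x y, dist e x y <= D ->
         #|[set z | e y z && (dist e x z == (dist e x y).-1)]| = c (dist e x y)
      /\ #|[set z | e y z && (dist e x z == (dist e x y).+1)]| = b (dist e x y))].

Definition inter_a (R : ringType) (b c : nat -> nat) (i : nat) : R :=
  (b 0)%:R - (b i)%:R - (c i)%:R.

Local Open Scope ring_scope.

Definition adjacency (R : ringType) (n : nat) (e : rel 'I_n) : 'M[R]_n :=
  \matrix_(x, y) (e x y)%:R.

Definition orth_proj_eigenspace (R : fieldType) (n : nat) (A E : 'M[R]_n)
    (theta : R) : Prop :=
  [/\ E^T = E, E *m E = E & (E :=: eigenspace A theta)%MS].

Definition hadamard (R : ringType) (n : nat) (M N : 'M[R]_n) : 'M[R]_n :=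
  \matrix_(x, y) (M x y * N x y).

From HB Require Import structures.
From mathcomp Require Import all_boot all_order all_algebra.
From mathcomp Require Import reals.
From mathcomp Require Import zify ring lra.
Import Order.TTheory GRing.Theory Num.Theory.
Set Implicit Arguments. Unset Strict Implicit.
Local Open Scope ring_scope.

(* Since Gamma has diameter 3 and exactly four eigenvalues, the adjacency
   matrix A satisfies (A - th0)(A - th1)(A - th2)(A - th3) = 0 inside the
   Bose-Mesner algebra spanned by the distance matrices A_0, ..., A_3, so the
   projection E_1 = sum_i g_i A_i lies in that algebra.  The recurrence
   A E_1 = a_3 E_1 forces g_2 = 0, g_0 = b g_1 and b_2 g_3 = - c_2 g_1 (and
   k = b a_3).  Hence E_1 o E_1 = sum_i g_i^2 A_i acts on the th-eigenspace,
   th <> a_3, as g_1^2 / b_2 * ((b_2 + c_2) th + b (b b_2 + c_2)), which is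
   q^h_11 / n for th = th_h: each q^h_11 (h = 2, 3) is a positive multiple of
   th_h - bound.  The Krein condition q^3_11 >= 0, a consequence of the Schur
   product theorem, then gives the bound, and q^2_11 > 0 because th_2 > th_3. *)

Section SymmetricIdempotent.
Variables (R : realFieldType) (n : nat).
Implicit Types (F G H : 'M[R]_n) (u : 'I_n -> R).

Lemma sym_idem_entry F : F^T = F -> F *m F = F ->
  forall x y, F x y = \sum_w F x w * F y w.
Proof.
move=> Ft Fi x y; rewrite -{1}Fi mxE; apply: eq_bigr => w _.
by rewrite -{2}Ft mxE.
Qed.

Lemma sym_idem_quad_ge0 F u : F^T = F -> F *m F = F ->
  0 <= \sum_x \sum_y u x * F x y * u y.
Proof.
move=> Ft Fi.
have -> : \sum_x \sum_y u x * F x y * u y = \sum_w (\sum_x u x * F x w) ^+ 2.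
  transitivity (\sum_x \sum_y \sum_w (u x * F x w) * (u y * F y w)).
    apply: eq_bigr => x _; apply: eq_bigr => y _.
    rewrite (sym_idem_entry Ft Fi) mulr_sumr mulr_suml.
    by apply: eq_bigr => w _; ring.
  under eq_bigr => x _ do rewrite exchange_big /=.
  rewrite exchange_big /=; apply: eq_bigr => w _.
  by rewrite expr2 mulr_suml; apply: eq_bigr => x _; rewrite mulr_sumr.
by apply: sumr_ge0 => w _; exact: sqr_ge0.
Qed.

Lemma sym_idem_hadamard_quad_ge0 F G u :
  F^T = F -> F *m F = F -> G^T = G -> G *m G = G ->
  0 <= \sum_x \sum_y u x * hadamard F G x y * u y.
Proof.
move=> Ft Fi Gt Gi.
have -> : \sum_x \sum_y u x * hadamard F G x y * u y
    = \sum_w \sum_x \sum_y (u x * F x w) * G x y * (u y * F y w).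
  transitivity (\sum_x \sum_y \sum_w (u x * F x w) * G x y * (u y * F y w)).
    apply: eq_bigr => x _; apply: eq_bigr => y _.
    rewrite mxE (sym_idem_entry Ft Fi x y) mulr_suml mulr_sumr mulr_suml.
    by apply: eq_bigr => w _; ring.
  under eq_bigr => x _ do rewrite exchange_big /=.
  by rewrite exchange_big.
by apply: sumr_ge0 => w _; exact: sym_idem_quad_ge0.
Qed.

Lemma hadamard_mul_trace_ge0 F G H :
  F^T = F -> F *m F = F -> G^T = G -> G *m G = G -> H^T = H -> H *m H = H ->
  0 <= \tr (hadamard F G *m H).
Proof.
move=> Ft Fi Gt Gi Ht Hi.
have -> : \tr (hadamard F G *m H)
    = \sum_z \sum_x \sum_y H x z * hadamard F G x y * H y z.
  transitivity (\sum_x \sum_y \sum_z H x z * hadamard F G x y * H y z).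
    apply: eq_bigr => x _; rewrite mxE; apply: eq_bigr => y _.
    by rewrite (sym_idem_entry Ht Hi y x) mulr_sumr; apply: eq_bigr => z _; ring.
  under eq_bigr => x _ do rewrite exchange_big /=.
  by rewrite exchange_big.
by apply: sumr_ge0 => z _; exact: sym_idem_hadamard_quad_ge0.
Qed.

Lemma sym_idem_trace_gt0 G : G^T = G -> G *m G = G -> G != 0 -> 0 < \tr G.
Proof.
move=> Gt Gi G_neq0.
have trE : \tr G = \sum_x \sum_y G x y ^+ 2.
  by apply: eq_bigr => x _; rewrite (sym_idem_entry Gt Gi); apply: eq_bigr => y _.
have sq_ge0 x : 0 <= \sum_y G x y ^+ 2 by apply: sumr_ge0 => y _; exact: sqr_ge0.
rewrite trE lt_def sumr_ge0 ?andbT //; apply: contra G_neq0 => /eqP tr0.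
apply/eqP/matrixP => x y; rewrite mxE; apply/eqP; rewrite -sqrf_eq0; apply/eqP.
have row0 : \sum_y G x y ^+ 2 = 0 by exact: (psumr_eq0P (fun x _ => sq_ge0 x) tr0).
by apply: (psumr_eq0P _ row0) => // z _; exact: sqr_ge0.
Qed.

Lemma krein_ge0 F G r : F^T = F -> F *m F = F -> G^T = G -> G *m G = G ->
  G != 0 -> hadamard F F *m G = r *: G -> 0 <= r.
Proof.
move=> Ft Fi Gt Gi G_neq0 FFG.
have := hadamard_mul_trace_ge0 Ft Fi Ft Fi Gt Gi.
by rewrite FFG mxtraceZ pmulr_lge0 // sym_idem_trace_gt0.
Qed.

End SymmetricIdempotent.

Section EigenProjections.
Variables (R : realFieldType) (n : nat) (A : 'M[R]_n).
Hypothesis A_sym : A^T = A.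

Lemma eigenproj_mulmxA E t : orth_proj_eigenspace A E t -> E *m A = t *: E.
Proof. by case=> _ _ Eeig; apply/eigenspaceP; rewrite Eeig. Qed.

Lemma eigenproj_mulAmx E t : orth_proj_eigenspace A E t -> A *m E = t *: E.
Proof.
move=> pE; have [Et _ _] := pE.
by rewrite -{1}A_sym -{1}Et -trmx_mul (eigenproj_mulmxA pE) linearZ /= Et.
Qed.

Lemma eigenproj_neq0 E t :
  orth_proj_eigenspace A E t -> eigenvalue A t -> E != 0.
Proof. by case=> _ _ Eeig; rewrite -mxrank_eq0 Eeig mxrank_eq0. Qed.

Lemma eigenvalue_col t :
  eigenvalue A t -> exists2 v : 'cV_n, v != 0 & A *m v = t *: v.
Proof.
case/eigenvalueP=> v vA v_neq0; exists v^T; first by rewrite trmx_eq0.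
by rewrite -{1}A_sym -trmx_mul vA linearZ.
Qed.

Lemma eigen_mulmx_eq0 (E F : 'M[R]_n) s t :
  s != t -> E *m A = s *: E -> A *m F = t *: F -> E *m F = 0.
Proof.
move=> st EA AF; have : (s - t) *: (E *m F) = 0.
  by rewrite scalerBl scalemxAl -EA scalemxAr -AF mulmxA subrr.
by move/eqP; rewrite scaler_eq0 subr_eq0 (negbTE st) => /eqP.
Qed.

Variables (k : nat) (th : 'I_k -> R) (E : 'I_k -> 'M[R]_n).
Hypotheses (th_inj : injective th)
  (E_proj : forall i, orth_proj_eigenspace A (E i) (th i)).

Lemma sum_eigenproj_mulmx (q : 'I_k -> R) j :
  (\sum_i q i *: E i) *m E j = q j *: E j.
Proof.
have [_ Eidem _] := E_proj j.
rewrite mulmx_suml (bigD1 j) //= big1 ?addr0 => [|i ij].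
  by rewrite -scalemxAl Eidem.
rewrite -scalemxAl (eigen_mulmx_eq0 _ (eigenproj_mulmxA (E_proj i))
  (eigenproj_mulAmx (E_proj j))) ?scaler0 //.
by rewrite (inj_eq th_inj).
Qed.

Lemma krein_condition (q : 'I_k -> R) j h : (0 < n)%N -> eigenvalue A (th h) ->
  hadamard (E j) (E j) = n%:R^-1 *: \sum_i q i *: E i -> 0 <= q h.
Proof.
move=> n_gt0 eig_h EjEj.
have [Ejt Ejidem _] := E_proj j; have [Eht Ehidem _] := E_proj h.
have := krein_ge0 Ejt Ejidem Eht Ehidem (eigenproj_neq0 (E_proj h) eig_h).
rewrite EjEj -scalemxAl sum_eigenproj_mulmx scalerA => /(_ _ erefl).
by rewrite pmulr_rge0 // invr_gt0 ltr0n.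
Qed.

End EigenProjections.

Lemma scalerIf (R : fieldType) (V : lmodType R) (v : V) :
  v != 0 -> injective ( *:%R^~ v).
Proof.
move=> v_neq0 x y /eqP; rewrite -subr_eq0 -scalerBl scaler_eq0 (negbTE v_neq0).
by rewrite orbF subr_eq0 => /eqP.
Qed.

Lemma cubic_eq0 (R : idomainType) (a0 a1 a2 a3 : R) (s : seq R) :
  uniq s -> (3 < size s)%N ->
  {in s, forall t, a0 + a1 * t + a2 * t ^+ 2 + a3 * t ^+ 3 = 0} ->
  [/\ a0 = 0, a1 = 0, a2 = 0 & a3 = 0].
Proof.
move=> s_uniq s_size s_roots; pose p := Poly [:: a0; a1; a2; a3].
have p_eq0 : p = 0.
  apply/eqP/negPn/negP => p_neq0.
  have roots_p : all (root p) s.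
    apply/allP => t /s_roots; rewrite /root horner_Poly /= mul0r add0r => <-.
    by apply/eqP; ring.
  have := max_poly_roots p_neq0 roots_p s_uniq.
  by rewrite ltnNge (leq_trans (size_Poly _)).
have coef_eq0 i : [:: a0; a1; a2; a3]`_i = 0 by rewrite -coef_Poly -/p p_eq0 coef0.
by split; [exact: coef_eq0 0%N | exact: coef_eq0 1%N | exact: coef_eq0 2%N
  | exact: coef_eq0 3%N].
Qed.

Local Close Scope ring_scope.

Section Walks.
Variables (n : nat) (e : rel 'I_n).

Lemma within_mono k x y : within e k x y -> within e k.+1 x y.
Proof. by move=> h; rewrite /= h. Qed.

Lemma within_le k m x y : k <= m -> within e k x y -> within e m x y.
Proof. by move=> /subnK <-; elim: (m - k) => [//|d IH] /IH /within_mono. Qed.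

Lemma within_step k x y z : within e k x y -> e y z -> within e k.+1 x z.
Proof. by move=> h1 h2; apply/orP; right; apply/existsP; exists y; apply/andP. Qed.

Lemma within_pre k x y z : e x y -> within e k y z -> within e k.+1 x z.
Proof.
elim: k z => [|k IH] z exy.
  by move/eqP <-; apply/orP; right; apply/existsP; exists x; rewrite /= eqxx.
case/orP => [/(IH _ exy) /within_mono //|/existsP[w /andP[h1 h2]]].
exact: within_step (IH _ exy h1) h2.
Qed.

Lemma within1 x y : within e 1 x y = (x == y) || e x y.
Proof.
congr (_ || _); apply/existsP/idP => [[z /andP[/eqP-> //]]|exy].
by exists x; rewrite eqxx.
Qed.

Hypothesis e_sym : symmetric e.

Lemma within_sym k x y : within e k x y -> within e k y x.
Proof.
elim: k x y => [|k IH] x y; first by rewrite /= eq_sym.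
case/orP => [/IH /within_mono //|/existsP[w /andP[h1 h2]]].
by apply: within_pre (IH _ _ h1); rewrite e_sym.
Qed.

End Walks.

Section DiameterThree.
Variables (n : nat) (e : rel 'I_n) (b c : nat -> nat).
Hypothesis drg : distance_regular e 3 b c.

Let e_sym : symmetric e. Proof. by case: drg. Qed.
Let e_irr : irreflexive e. Proof. by case: drg. Qed.
Let within3 x y : within e 3 x y. Proof. by case: drg => _ _ + _ _; apply. Qed.
Let diam3 : exists x y, ~~ within e 2 x y. Proof. by case: drg. Qed.
Let inter_numbers x y : dist e x y <= 3 ->
    #|[set z | e y z && (dist e x z == (dist e x y).-1)]| = c (dist e x y)
 /\ #|[set z | e y z && (dist e x z == (dist e x y).+1)]| = b (dist e x y).
Proof. by case: drg => _ _ _ _; apply. Qed.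

Lemma edge_neq x y : e x y -> x != y.
Proof. by apply: contraTneq => ->; rewrite e_irr. Qed.

Lemma order_gt3 : 3 < n.
Proof.
have [x [y not2]] := diam3.
have /existsP[z /andP[xz zy]] : [exists z, within e 2 x z && e z y].
  by have := within3 x y; rewrite /= -/(within e 2 x y) (negbTE not2).
have not1 : ~~ within e 1 x z by apply: contra not2 => xz1; exact: within_step xz1 zy.
have /existsP[w /andP[xw wz]] : [exists w, within e 1 x w && e w z].
  by move: xz; rewrite /= -/(within e 1 x z) (negbTE not1).
have {}xw : e x w.
  move: xw; rewrite within1 => /orP[/eqP xw|//].
  by rewrite within1 xw wz orbT in not1.
have not1y : ~~ within e 1 x y by apply: contra not2; apply: within_mono.
have xz_neq : x != z by apply: contra not1 => /eqP->; rewrite within1 eqxx.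
have xy_neq : x != y by apply: contra not1y => /eqP->; rewrite within1 eqxx.
have wy_neq : w != y by apply: contra not1y => /eqP<-; rewrite within1 xw orbT.
have uniq_xwzy : uniq [:: x; w; z; y].
  by rewrite /= !inE !negb_or xz_neq xy_neq wy_neq !edge_neq.
have := uniq_leq_size uniq_xwzy (fun t _ => mem_enum 'I_n t).
by rewrite size_enum_ord.
Qed.

(* [dist] only searches lengths below [n]; [order_gt3] makes 3 one of them. *)
Lemma dist_spec x y : [/\ dist e x y <= 3, within e (dist e x y) x y &
   forall k, within e k x y -> dist e x y <= k].
Proof.
pose p k := within e k x y.
have p_iota : has p (iota 0 n).
  by apply/hasP; exists 3; [rewrite mem_iota ltnW ?order_gt3 | exact: within3].
have find_lt : find p (iota 0 n) < n by rewrite -{2}(size_iota 0 n) -has_find.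
split.
- rewrite leqNgt; apply/negP => /(before_find 0).
  by rewrite nth_iota ?order_gt3 // add0n /p within3.
- by have := nth_find 0 p_iota; rewrite nth_iota // add0n.
- move=> k pk; rewrite leqNgt; apply/negP => lt_k.
  have := before_find 0 lt_k; rewrite nth_iota ?add0n ?(ltn_trans lt_k find_lt) //.
  by rewrite /p pk.
Qed.

Lemma dist_le3 x y : dist e x y <= 3. Proof. by case: (dist_spec x y). Qed.

Lemma within_dist x y : within e (dist e x y) x y.
Proof. by case: (dist_spec x y). Qed.

Lemma dist_min k x y : within e k x y -> dist e x y <= k.
Proof. by case: (dist_spec x y) => _ _; apply. Qed.

Lemma dist_sym x y : dist e x y = dist e y x.
Proof.
by apply/eqP; rewrite eqn_leq !dist_min // within_sym // within_dist.
Qed.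

Lemma dist_eq0 x y : (dist e x y == 0) = (x == y).
Proof.
apply/idP/idP => [/eqP d0|/eqP->]; first by have := within_dist x y; rewrite d0.
by rewrite -leqn0 dist_min //= eqxx.
Qed.

Lemma dist_xx x : dist e x x = 0. Proof. by apply/eqP; rewrite dist_eq0. Qed.

Lemma dist_eq1 x y : (dist e x y == 1) = e x y.
Proof.
apply/idP/idP => [/eqP d1|exy].
  have := within_dist x y; rewrite d1 within1 => /orP[/eqP xy|//].
  by rewrite xy dist_xx in d1.
by rewrite eqn_leq dist_min ?within1 ?exy ?orbT //= lt0n dist_eq0 edge_neq.
Qed.

Lemma dist_adj x y z : e y z -> dist e x z <= (dist e x y).+1.
Proof. by move=> yz; apply/dist_min/within_step/yz/within_dist. Qed.

Lemma dist_pred_adj x y k : dist e x y = k.+1 -> exists2 z, dist e x z = k & e z y.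
Proof.
move=> dk; have := within_dist x y; rewrite dk /=.
have /negbTE-> /= : ~~ within e k x y by apply/negP => /dist_min; rewrite dk ltnn.
case/existsP=> z /andP[xz zy]; exists z => //.
by apply/eqP; rewrite eqn_leq dist_min //= -ltnS -dk dist_adj.
Qed.

Lemma exists_dist j : j <= 3 -> exists x y, dist e x y = j.
Proof.
have [x [y d3]] : exists x y, dist e x y = 3.
  have [x [y not2]] := diam3; exists x, y; apply/eqP; rewrite eqn_leq dist_le3 /=.
  by rewrite ltnNge; apply: contra not2 => /within_le; apply; exact: within_dist.
have [z d2 _] := dist_pred_adj d3; have [w d1 _] := dist_pred_adj d2.
case: j => [|[|[|[|//]]]] _; [exists x, x; exact: dist_xx | by exists x, w
  | by exists x, z | by exists x, y].
Qed.

Lemma c_gt0 j : 0 < j <= 3 -> 0 < c j.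
Proof.
case: j => // j /= j_le3; have [x [y dxy]] := exists_dist j_le3.
have [z dxz zy] := dist_pred_adj dxy.
have := inter_numbers (leq_trans (eq_leq dxy) j_le3); rewrite dxy => -[<- _].
by apply/card_gt0P; exists z; rewrite inE e_sym zy dxz /=.
Qed.

Lemma b_gt0 j : j <= 2 -> 0 < b j.
Proof.
move=> j_le2; have [x [y dxy]] := exists_dist (j_le2 : j.+1 <= 3).
have [z dxz zy] := dist_pred_adj dxy.
have := inter_numbers (leq_trans (eq_leq dxz) (leqW j_le2)); rewrite dxz.
by case=> _ <-; apply/card_gt0P; exists y; rewrite inE zy dxy eqxx.
Qed.

Lemma c1 : c 1 = 1.
Proof.
have [x [y dxy]] := exists_dist (isT : 1 <= 3).
have := inter_numbers (dist_le3 x y); rewrite dxy => -[<- _].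
rewrite -[RHS](cards1 x); apply: eq_card => z; rewrite !inE /= dist_eq0.
apply/andP/eqP => [[_ /eqP //]|->]; by rewrite e_sym -dist_eq1 dxy eqxx.
Qed.

Lemma b3 : b 3 = 0.
Proof.
have [x [y dxy]] := exists_dist (leqnn 3).
have := inter_numbers (dist_le3 x y); rewrite dxy => -[_ <-].
apply/eqP; rewrite cards_eq0; apply/eqP/setP => z; rewrite !inE.
by rewrite eqn_leq ltnNge dist_le3 !andbF.
Qed.

Lemma card_adj x : #|[set z | e x z]| = b 0.
Proof.
have := inter_numbers (dist_le3 x x); rewrite dist_xx => -[_ <-].
by apply: eq_card => z; rewrite !inE dist_eq1 andbb.
Qed.

Variable R : realFieldType.
Local Open Scope ring_scope.
Local Notation A := (adjacency R e).
Local Notation a := (inter_a R b c).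

(* [bm_mx f] is the element sum_i f i A_i of the Bose-Mesner algebra, where
   A_i = [dist_mx i] is the i-th distance matrix. *)
Definition bm_mx (f : nat -> R) : 'M[R]_n := \matrix_(x, y) f (dist e x y).

Definition dist_mx i := bm_mx (fun j => (j == i)%:R).

Lemma bm_mx_ext f g : {in [pred i | i <= 3]%N, f =1 g} -> bm_mx f = bm_mx g.
Proof. by move=> fg; apply/matrixP => x y; rewrite !mxE fg ?inE ?dist_le3. Qed.

Lemma bm_mx_inj f g : bm_mx f = bm_mx g -> {in [pred i | i <= 3]%N, f =1 g}.
Proof.
move=> fg j; rewrite inE => /exists_dist[x [y <-]].
by have := congr1 (fun M : 'M_n => M x y) fg; rewrite !mxE.
Qed.

Lemma addmx_bm f g : bm_mx f + bm_mx g = bm_mx (fun i => f i + g i).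
Proof. by apply/matrixP => x y; rewrite !mxE. Qed.

Lemma scalemx_bm r f : r *: bm_mx f = bm_mx (fun i => r * f i).
Proof. by apply/matrixP => x y; rewrite !mxE. Qed.

Lemma bm_mx_dist f :
  bm_mx f = f 0%N *: dist_mx 0 + f 1%N *: dist_mx 1 + f 2%N *: dist_mx 2
            + f 3%N *: dist_mx 3.
Proof.
rewrite /dist_mx !scalemx_bm !addmx_bm.
by apply: bm_mx_ext => -[|[|[|[|//]]]] _ /=; ring.
Qed.

Lemma tr_bm_mx f : (bm_mx f)^T = bm_mx f.
Proof. by apply/matrixP => x y; rewrite !mxE dist_sym. Qed.

Lemma tr_adjacency : A^T = A.
Proof. by apply/matrixP => x y; rewrite !mxE e_sym. Qed.

Lemma hadamard_bm f g : hadamard (bm_mx f) (bm_mx g) = bm_mx (fun i => f i * g i).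
Proof. by apply/matrixP => x y; rewrite !mxE. Qed.

Lemma dist_mx0 : dist_mx 0 = 1%:M.
Proof. by apply/matrixP => x y; rewrite !mxE dist_eq0. Qed.

Lemma dist_mx1 : dist_mx 1 = A.
Proof. by apply/matrixP => x y; rewrite !mxE dist_eq1. Qed.

Lemma sum_indicator (P : pred 'I_n) (r : R) :
  \sum_z (P z)%:R * r = #|[set z | P z]|%:R * r.
Proof.
rewrite -big_distrl /=; congr (_ * _).
rewrite cardsE -sum1_card natr_sum [RHS]big_mkcond /=; apply: eq_bigr => z _.
by rewrite unfold_in; case: (P z).
Qed.

Lemma mul_adj_bm f : A *m bm_mx f =
  bm_mx (fun i => (c i)%:R * f i.-1 + a i * f i + (b i)%:R * f i.+1).
Proof.
apply/matrixP => x y; rewrite !mxE.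
under eq_bigr => z _ do rewrite !mxE (dist_sym z y).
rewrite (dist_sym x y); set i := dist e y x.
(* every neighbour of x is at distance i - 1, i or i + 1 from y *)
have split_nbr z : (e x z)%:R * f (dist e y z) =
    (e x z && (dist e y z == i.-1))%:R * (f i.-1 - f i)
  + (e x z && (dist e y z == i.+1))%:R * (f i.+1 - f i) + (e x z)%:R * f i.
  case xz: (e x z); last by rewrite !mul0r !addr0.
  have : (dist e y z <= i.+1 /\ i <= (dist e y z).+1)%N.
    by split; apply: dist_adj; rewrite // e_sym.
  case: (eqVneq (dist e y z) i.-1) => [->|ne1] /=.
    case: i => [|i] _ /=; first ring.
    by rewrite ltn_eqF // mul0r; ring.
  case: (eqVneq (dist e y z) i.+1) => [->|ne2] /=; first by move=> _; ring.
  have [i0|i_gt0] := posnP i.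
    have yx : y = x by apply/eqP; rewrite -dist_eq0 -/i i0.
    by rewrite i0 yx dist_eq1 xz in ne2.
  by move=> [? ?]; rewrite (_ : dist e y z = i); [ring | lia].
rewrite (eq_bigr _ (fun z _ => split_nbr z)) !big_split /= !sum_indicator card_adj.
have [-> ->] := inter_numbers (dist_le3 y x).
rewrite /inter_a; ring.
Qed.

Lemma mul_adj_dist_mx1 :
  A *m dist_mx 1 = (c 2)%:R *: dist_mx 2 + a 1 *: dist_mx 1 + (b 0)%:R *: dist_mx 0.
Proof.
rewrite mul_adj_bm /dist_mx !scalemx_bm !addmx_bm.
by apply: bm_mx_ext => -[|[|[|[|//]]]] _ /=; rewrite /inter_a c1; ring.
Qed.

Lemma mul_adj_dist_mx2 :
  A *m dist_mx 2 = (c 3)%:R *: dist_mx 3 + a 2 *: dist_mx 2 + (b 1)%:R *: dist_mx 1.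
Proof.
rewrite mul_adj_bm /dist_mx !scalemx_bm !addmx_bm.
by apply: bm_mx_ext => -[|[|[|[|//]]]] _ /=; rewrite /inter_a; ring.
Qed.

Lemma mul_adj_dist_mx3 : A *m dist_mx 3 = a 3 *: dist_mx 3 + (b 2)%:R *: dist_mx 2.
Proof.
rewrite mul_adj_bm /dist_mx !scalemx_bm !addmx_bm.
by apply: bm_mx_ext => -[|[|[|[|//]]]] _ /=; rewrite /inter_a b3; ring.
Qed.

(* The values at t of the polynomials v_2, v_3 with A_i = v_i(A), read off the
   three-term recurrence for A *m A_i. *)
Definition v2 (t : R) := (t * t - a 1 * t - (b 0)%:R) / (c 2)%:R.
Definition v3 (t : R) := (t * v2 t - a 2 * v2 t - (b 1)%:R * t) / (c 3)%:R.

Definition bm_eigenvalue (f : nat -> R) t :=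
  f 0%N + f 1%N * t + f 2%N * v2 t + f 3%N * v3 t.

Lemma c_neq0 j : (0 < j <= 3)%N -> (c j)%:R != 0 :> R.
Proof. by move/c_gt0; rewrite pnatr_eq0 -lt0n. Qed.

Lemma b_neq0 j : (j <= 2)%N -> (b j)%:R != 0 :> R.
Proof. by move/b_gt0; rewrite pnatr_eq0 -lt0n. Qed.

Section Eigenvector.
Variables (m : nat) (V : 'M[R]_(n, m)) (t : R).
Hypothesis AV : A *m V = t *: V.

Lemma mul_adj_sub_scalar s : (A - s%:M) *m V = (t - s) *: V.
Proof. by rewrite mulmxBl AV mul_scalar_mx scalerBl. Qed.

Lemma dist_mx2_eigen : dist_mx 2 *m V = v2 t *: V.
Proof.
apply: (scalerI (c_neq0 (isT : (0 < 2 <= 3)%N))).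
have := congr1 (mulmx^~ V) mul_adj_dist_mx1.
rewrite /= -mulmxA dist_mx1 AV -scalemxAr AV !mulmxDl -!scalemxAl dist_mx0 mul1mx AV.
rewrite !scalerA [_ * v2 t]mulrC divfK ?c_neq0 // => h.
by apply/matrixP => x y; move/matrixP/(_ x y): h; rewrite !mxE => h; lra.
Qed.

Lemma dist_mx3_eigen : dist_mx 3 *m V = v3 t *: V.
Proof.
apply: (scalerI (c_neq0 (isT : (0 < 3 <= 3)%N))).
have := congr1 (mulmx^~ V) mul_adj_dist_mx2.
rewrite /= -mulmxA dist_mx2_eigen -scalemxAr AV !mulmxDl -!scalemxAl.
rewrite dist_mx2_eigen dist_mx1 AV !scalerA [_ * v3 t]mulrC divfK ?c_neq0 // => h.
by apply/matrixP => x y; move/matrixP/(_ x y): h; rewrite !mxE => h; lra.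
Qed.

Lemma v3_recurrence : V != 0 -> (t - a 3) * v3 t = (b 2)%:R * v2 t.
Proof.
move=> V_neq0; have := congr1 (mulmx^~ V) mul_adj_dist_mx3.
rewrite /= -mulmxA dist_mx3_eigen -scalemxAr AV mulmxDl -!scalemxAl.
rewrite dist_mx2_eigen dist_mx3_eigen !scalerA -scalerDl => /(scalerIf V_neq0).
by move=> h; lra.
Qed.

Lemma bm_mulmx_eigen f : bm_mx f *m V = bm_eigenvalue f t *: V.
Proof.
rewrite bm_mx_dist !mulmxDl -!scalemxAl dist_mx0 mul1mx dist_mx1 AV.
by rewrite dist_mx2_eigen dist_mx3_eigen !scalerA -!scalerDl.
Qed.

End Eigenvector.

Lemma bm_mx_eq0 f (s : seq R) : uniq s -> (3 < size s)%N ->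
  {in s, forall t, bm_eigenvalue f t = 0} -> bm_mx f = 0.
Proof.
move=> s_uniq s_size f_s.
have c2 := c_neq0 (isT : (0 < 2 <= 3)%N); have c3 := c_neq0 (isT : (0 < 3 <= 3)%N).
(* the coefficients of t |-> bm_eigenvalue f t in the monomial basis *)
pose e3 := f 3%N / ((c 2)%:R * (c 3)%:R).
pose e2 := f 2%N / (c 2)%:R - f 3%N * (a 1 + a 2) / ((c 2)%:R * (c 3)%:R).
pose e1 := f 1%N - f 2%N * a 1 / (c 2)%:R
  + f 3%N * (a 1 * a 2 - (b 0)%:R - (b 1)%:R * (c 2)%:R) / ((c 2)%:R * (c 3)%:R).
pose e0 := f 0%N - f 2%N * (b 0)%:R / (c 2)%:R
  + f 3%N * a 2 * (b 0)%:R / ((c 2)%:R * (c 3)%:R).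
have monomialE t : bm_eigenvalue f t = e0 + e1 * t + e2 * t ^+ 2 + e3 * t ^+ 3.
  by rewrite /bm_eigenvalue /v3 /v2 /e0 /e1 /e2 /e3; field; apply/andP.
have [] : [/\ e0 = 0, e1 = 0, e2 = 0 & e3 = 0].
  by apply: cubic_eq0 s_uniq s_size _ => t /f_s; rewrite monomialE.
move=> E0 E1 E2 /eqP; rewrite mulf_eq0 invr_eq0 mulf_eq0 (negbTE c2) (negbTE c3).
rewrite !orbF => /eqP f3; move: E2; rewrite /e2 f3 !mul0r subr0 => /eqP.
rewrite mulf_eq0 invr_eq0 (negbTE c2) orbF => /eqP f2.
move: E1 E0; rewrite /e1 /e0 f3 f2 !mul0r !subr0 !addr0 => f1 f0.
have -> : bm_mx f = bm_mx (fun=> 0) by apply: bm_mx_ext => -[|[|[|[|//]]]].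
by apply/matrixP => x y; rewrite !mxE.
Qed.

Definition adj_poly3 (s1 s2 s3 : R) := (A - s1%:M) *m ((A - s2%:M) *m (A - s3%:M)).

Lemma adj_sub_mulmx_bm s f : exists g, (A - s%:M) *m bm_mx f = bm_mx g.
Proof.
exists (fun i => (c i)%:R * f i.-1 + a i * f i + (b i)%:R * f i.+1 - s * f i).
by rewrite mulmxBl mul_adj_bm mul_scalar_mx; apply/matrixP => x y; rewrite !mxE.
Qed.

Lemma adj_poly3_bm s1 s2 s3 : exists f, adj_poly3 s1 s2 s3 = bm_mx f.
Proof.
rewrite /adj_poly3 -[A - s3%:M]mulmx1 -dist_mx0.
have [f3 ->] := adj_sub_mulmx_bm s3 (fun j => (j == 0)%:R).
have [f2 ->] := adj_sub_mulmx_bm s2 f3.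
exact: adj_sub_mulmx_bm.
Qed.

Lemma adj_poly3_eigen m (V : 'M_(n, m)) t s1 s2 s3 : A *m V = t *: V ->
  adj_poly3 s1 s2 s3 *m V = ((t - s1) * (t - s2) * (t - s3)) *: V.
Proof.
move=> AV; rewrite /adj_poly3 -!mulmxA (mul_adj_sub_scalar AV s3).
rewrite -scalemxAr (mul_adj_sub_scalar AV s2) -!scalemxAr (mul_adj_sub_scalar AV s1).
by rewrite !scalerA; congr (_ *: _); ring.
Qed.

Lemma adj_min_poly s0 s1 s2 s3 :
  uniq [:: s0; s1; s2; s3] -> all (eigenvalue A) [:: s0; s1; s2; s3] ->
  (A - s0%:M) *m adj_poly3 s1 s2 s3 = 0.
Proof.
move=> s_uniq /allP s_eig; have [f Ef] := adj_poly3_bm s1 s2 s3.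
have [g Eg] := adj_sub_mulmx_bm s0 f; rewrite Ef Eg.
apply: (bm_mx_eq0 s_uniq) => // t t_s.
have [v v_neq0 Av] := eigenvalue_col tr_adjacency (s_eig t t_s).
have := bm_mulmx_eigen Av g; rewrite -Eg -Ef -mulmxA (adj_poly3_eigen _ _ _ Av).
rewrite -scalemxAr (mul_adj_sub_scalar Av s0) scalerA.
have -> : (t - s1) * (t - s2) * (t - s3) * (t - s0) = 0.
  by move: t_s; rewrite !inE => /or4P[] /eqP->; rewrite subrr ?(mulr0, mul0r).
by move/(scalerIf v_neq0)/esym.
Qed.

Lemma eigenproj_bm s0 s1 s2 s3 E :
  uniq [:: s0; s1; s2; s3] -> all (eigenvalue A) [:: s0; s1; s2; s3] ->
  orth_proj_eigenspace A E s0 -> exists g, E = bm_mx g.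
Proof.
move=> s_uniq s_eig pE; have [_ E_idem E_eig] := pE.
have [f Nf] := adj_poly3_bm s1 s2 s3; set N := adj_poly3 s1 s2 s3 in Nf.
have NA : N *m A = s0 *: N.
  have := congr1 trmx (adj_min_poly s_uniq s_eig).
  rewrite trmx_mul -/N Nf tr_bm_mx linearB /= tr_adjacency tr_scalar_mx trmx0.
  by rewrite -Nf mulmxBr mul_mx_scalar => /eqP; rewrite subr_eq0 => /eqP.
have NE : N *m E = N.
  have : (N <= E)%MS by rewrite E_eig; apply/eigenspaceP.
  by case/submxP=> D ->; rewrite -mulmxA E_idem.
have pi_neq0 : (s0 - s1) * (s0 - s2) * (s0 - s3) != 0.
  move: s_uniq; rewrite /= !inE !negb_or => /and4P[/and3P[? ? ?] _ _ _].
  by rewrite !mulf_neq0 // subr_eq0.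
exists (fun i => ((s0 - s1) * (s0 - s2) * (s0 - s3))^-1 * f i).
have AE := eigenproj_mulAmx tr_adjacency pE.
by rewrite -scalemx_bm -Nf -NE (adj_poly3_eigen _ _ _ AE) scalerA mulVf ?scale1r.
Qed.

Local Notation bG := (a 3 - a 1).

Section ShillaEigenvector.
Variable g : nat -> R.
Hypothesis Ag : A *m bm_mx g = a 3 *: bm_mx g.

Let shilla_rec : {in [pred i | i <= 3]%N,
  (fun i => (c i)%:R * g i.-1 + a i * g i + (b i)%:R * g i.+1) =1 *%R (a 3) \o g}.
Proof. by apply: bm_mx_inj; rewrite -mul_adj_bm Ag scalemx_bm. Qed.

Lemma shilla_coef :
  [/\ g 2%N = 0, g 0%N = bG * g 1%N & (b 2)%:R * g 3%N = - ((c 2)%:R * g 1%N)].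
Proof.
have := @shilla_rec 0%N isT; have := @shilla_rec 1%N isT.
have := @shilla_rec 2%N isT; have := @shilla_rec 3%N isT.
rewrite /= b3 c1 /inter_a => e3 e2 e1 e0.
have g2 : g 2%N = 0.
  apply/eqP; rewrite -(mulrI_eq0 _ (lregP (c_neq0 (isT : (0 < 3 <= 3)%N)))).
  by apply/eqP; lra.
by split=> //; rewrite g2 in e1 e2; lra.
Qed.

Hypothesis g_neq0 : bm_mx g != 0.

Lemma shilla_coef1_neq0 : g 1%N != 0.
Proof.
have [g2 g0 g3] := shilla_coef; apply: contra g_neq0 => /eqP g1.
rewrite g1 mulr0 in g0; rewrite g1 mulr0 oppr0 in g3; move/eqP: g3.
rewrite mulf_eq0 (negbTE (b_neq0 (isT : (2 <= 2)%N))) /= => /eqP g3.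
apply/eqP/matrixP => x y; rewrite !mxE.
by case: (dist e x y) (dist_le3 x y) => [|[|[|[|]]]].
Qed.

Lemma shilla_valency : (b 0)%:R = a 3 * bG.
Proof.
have [_ g0 _] := shilla_coef.
have := @shilla_rec 0%N isT; rewrite /= g0 /inter_a => e0.
by apply: (mulIf shilla_coef1_neq0); lra.
Qed.

Lemma shilla_hadamard_eigenvalue m (V : 'M_(n, m)) t :
  V != 0 -> A *m V = t *: V -> t != a 3 ->
  bm_eigenvalue (fun i => g i * g i) t = g 1%N * g 1%N / (b 2)%:R
    * (((b 2)%:R + (c 2)%:R) * t + bG * (bG * (b 2)%:R + (c 2)%:R)).
Proof.
move=> V_neq0 AV t_neq; have [g2 g0 g3] := shilla_coef.
have b2 := b_neq0 (isT : (2 <= 2)%N); have c2 := c_neq0 (isT : (0 < 2 <= 3)%N).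
have v3E : v3 t = (b 2)%:R * (t + bG) / (c 2)%:R.
  apply: (mulfI (_ : t - a 3 != 0)); first by rewrite subr_eq0.
  rewrite (v3_recurrence AV V_neq0) /v2 shilla_valency; field.
  by rewrite c2.
have g3E : g 3%N = - ((c 2)%:R * g 1%N) / (b 2)%:R by rewrite -g3 mulrC mulKf.
rewrite /bm_eigenvalue v3E g2 g0 g3E; field.
by rewrite b2 c2.
Qed.

End ShillaEigenvector.

Lemma shilla_krein_affine (th : 'I_4 -> R) (E : 'I_4 -> 'M[R]_n) (q : 'I_4 -> R) :
  injective th -> (forall i, eigenvalue A (th i)) -> th (inord 1) = a 3 ->
  (forall i, orth_proj_eigenspace A (E i) (th i)) ->
  hadamard (E (inord 1)) (E (inord 1)) = n%:R^-1 *: \sum_(h < 4) q h *: E h ->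
  exists2 r, 0 < r & forall h, h != inord 1 ->
    q h = r * (th h - - (bG * (bG * (b 2)%:R + (c 2)%:R)) / ((b 2)%:R + (c 2)%:R)).
Proof.
move=> th_inj eig shil proj E1E1.
have uniq_th : uniq [:: th (inord 1); th (inord 0); th (inord 2); th (inord 3)].
  have -> /= := map_inj_uniq th_inj [:: inord 1; inord 0; inord 2; inord 3].
  by rewrite !inE -!val_eqE /= !inordK.
have all_eig : all (eigenvalue A)
    [:: th (inord 1); th (inord 0); th (inord 2); th (inord 3)] by rewrite /= !eig.
have [g E1g] := eigenproj_bm uniq_th all_eig (proj (inord 1)).
have Ag : A *m bm_mx g = a 3 *: bm_mx g.
  by rewrite -E1g -shil (eigenproj_mulAmx tr_adjacency (proj _)).
have g_neq0 : bm_mx g != 0 by rewrite -E1g (eigenproj_neq0 (proj _)).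
have g1 := shilla_coef1_neq0 Ag g_neq0.
have b2 : 0 < (b 2)%:R :> R by rewrite ltr0n b_gt0.
have c2 : 0 < (c 2)%:R :> R by rewrite ltr0n c_gt0.
have n_gt0 : 0 < n%:R :> R by rewrite ltr0n (ltn_trans _ order_gt3).
exists (n%:R * (g 1%N * g 1%N / (b 2)%:R) * ((b 2)%:R + (c 2)%:R)).
  have g1_sq : 0 < g 1%N * g 1%N by rewrite lt_def mulf_neq0 //= -expr2 sqr_ge0.
  by apply: mulr_gt0; [apply: mulr_gt0; [|apply: divr_gt0] | apply: addr_gt0].
move=> h h1; have AEh := eigenproj_mulAmx tr_adjacency (proj h).
have Eh_neq0 := eigenproj_neq0 (proj h) (eig h).
have th_neq : th h != a 3 by rewrite -shil (inj_eq th_inj).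
have := sum_eigenproj_mulmx tr_adjacency th_inj proj q h.
move/(congr1 ( *:%R n%:R^-1)); rewrite scalemxAl -E1E1 E1g hadamard_bm.
rewrite (bm_mulmx_eigen AEh).
rewrite (shilla_hadamard_eigenvalue Ag g_neq0 Eh_neq0 AEh th_neq).
rewrite scalerA => /(scalerIf Eh_neq0) qhE.
rewrite -[q h](mulVKf (lt0r_neq0 n_gt0)) -qhE; field.
by rewrite gt_eqF ?addr_gt0 ?(gt_eqF n_gt0) ?(gt_eqF b2).
Qed.

End DiameterThree.

Local Open Scope ring_scope.

Theorem proposition15 (R : realType) (n : nat) (e : rel 'I_n)
    (b c : nat -> nat) (th : 'I_4 -> R) (E : 'I_4 -> 'M[R]_n)
    (q11 : 'I_4 -> R) :
  distance_regular e 3 b c ->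
  (forall i j : 'I_4, (i < j)%N -> th j < th i) ->
  (forall i, eigenvalue (adjacency R e) (th i)) ->
  (forall t : R, eigenvalue (adjacency R e) t -> exists i, t = th i) ->
  th (inord 1) = inter_a R b c 3%N ->
  (forall i, orth_proj_eigenspace (adjacency R e) (E i) (th i)) ->
  hadamard (E (inord 1)) (E (inord 1))
    = (n%:R)^-1 *: \sum_(h < 4) q11 h *: E h ->
  let bG := inter_a R b c 3%N - inter_a R b c 1%N in
  let bound := - (bG * (bG * (b 2%N)%:R + (c 2%N)%:R)) / ((b 2%N)%:R + (c 2%N)%:R) in
  [/\ 0 < q11 (inord 2),
      (0 <= q11 (inord 3) <-> bound <= th (inord 3)) &
      bound <= th (inord 3)].
Proof.
move=> drg th_decr eig _ shil proj E1E1 bG bound.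
have th_inj : injective th.
  move=> i j th_ij; apply: val_inj.
  by case: (ltngtP i j) => // /th_decr; rewrite th_ij ltxx.
have [r r_gt0 qE] := shilla_krein_affine drg th_inj eig shil proj E1E1.
have n_gt0 : (0 < n)%N by exact: leq_ltn_trans (leq0n 3) (order_gt3 drg).
have q3_ge0 : 0 <= q11 (inord 3).
  exact (krein_condition (tr_adjacency drg R) th_inj proj n_gt0 (eig _) E1E1).
have neq1 k : (k <= 3)%N -> k != 1%N -> inord k != inord 1 :> 'I_4.
  by move=> k_le3 k_neq1; rewrite -val_eqE /= !inordK.
have bound_iff : 0 <= q11 (inord 3) <-> bound <= th (inord 3).
  by rewrite qE ?neq1 // pmulr_rge0 // subr_ge0.
have bound_le := bound_iff.1 q3_ge0.
split=> //; rewrite qE ?neq1 // pmulr_rgt0 // subr_gt0.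
by apply: le_lt_trans bound_le (th_decr _ _ _); rewrite !inordK.
Qed.
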